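(* There exist constants $\varepsilon_0>0$ and $C>0$ with the following property. Let $r>0$, $\delta>0$, $R:=r/\delta$ and $\varepsilon:=R+\tfrac12-\lfloor R+\tfrac12\rfloor$. If $\varepsilon\in[0,\varepsilon_0]$ and $R$ is sufficiently large, then for every unit-norm tight frame $\mathcal{F}$ of $\mathbb{R}^2$, $$\mathcal{E}_\delta(r,\mathcal{F})\ge C\,\frac{\delta^{3/2}}{\sqrt r}.$$
   Context: A finite family $\mathcal{F}=\{e_j\}_{j=1}^N\subset\mathbb{R}^2$ is a unit-norm tight frame if $\|e_j\|=1$ for all $j$ and $\sum_j e_je_j^T=\frac{N}{2}I_2$. For $\delta>0$, $Q_\delta(t):=\delta\lfloor t/\delta+1/2\rfloor$, and $E_\delta(x,\mathcal{F}):=\bigl\|x-\frac{2}{N}\sum_{j=1}^N Q_\delta(\langle x,e_j\rangle)e_j\bigr\|$ (Euclidean norm). For $r>0$ set $x_\psi:=r[\cos\psi,\sin\psi]^T$ and $$\mathcal{E}_\delta(r,\mathcal{F}):=\Bigl(\int_0^{2\pi}E_\delta(x_\psi,\mathcal{F})^2\,d\psi\Bigr)^{1/2}.$$ *)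

From Stdlib Require Import Reals Lra ZArith.
Open Scope R_scope.

(* floor: Int_part-like; up x is the unique integer with x < up x <= x + 1 *)
Definition Zfloor (x : R) : Z := (up x - 1)%Z.

Fixpoint rsum (n : nat) (f : nat -> R) : R :=
  match n with
  | O => 0
  | S k => rsum k f + f k
  end.

Definition Qd (d t : R) : R := d * IZR (Zfloor (t / d + / 2)).

(* A frame of N vectors e_j = (ex j, ey j), j = 0..N-1, in R^2:
   unit norm and sum_j e_j e_j^T = (N/2) I_2. *)
Definition UNTF (N : nat) (ex ey : nat -> R) : Prop :=
  (0 < N)%nat /\
  (forall j, (j < N)%nat -> ex j ^ 2 + ey j ^ 2 = 1) /\
  rsum N (fun j => ex j * ex j) = INR N / 2 /\
  rsum N (fun j => ey j * ey j) = INR N / 2 /\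
  rsum N (fun j => ex j * ey j) = 0.

Definition Ed (d : R) (N : nat) (ex ey : nat -> R) (x1 x2 : R) : R :=
  let c j := Qd d (x1 * ex j + x2 * ey j) in
  let y1 := x1 - 2 / INR N * rsum N (fun j => c j * ex j) in
  let y2 := x2 - 2 / INR N * rsum N (fun j => c j * ey j) in
  sqrt (y1 ^ 2 + y2 ^ 2).

Definition Ed2 (d r : R) (N : nat) (ex ey : nat -> R) (psi : R) : R :=
  Ed d N ex ey (r * cos psi) (r * sin psi) ^ 2.

(* Write t_j = <x_psi, e_j>.  Tightness gives
   <x, x - (2/N) sum_j Q(t_j) e_j> = (2/N) sum_j t_j (t_j - Q(t_j)), so by Cauchy-Schwarz
   r E_delta(x_psi) dominates the frame average of t (t - Q t).  For every unit vector the
   integral over psi of t (t - Q t), with t = r cos (psi - theta), is the same: writing Q as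
   a sum of level indicators it equals 4 delta^2 (pi R^2/4 - sum_i sqrt (R^2 - (i + 1/2)^2)),
   the error of the midpoint rule for the area of a quarter disc of radius R.  This error is
   a sum of nonnegative trapezoid errors of the concave quarter circle plus a last sliver.
   When R + 1/2 exceeds an integer by at most eps_0, the last full trapezoid lies where the
   circle is steep and contributes of order sqrt R, while the sliver costs O(sqrt (eps R)).
   Finally E^2 >= 2 a E - a^2 with a of the order of that integral over r gives the bound. *)

From Pilot Require Import Defs.
From Stdlib Require Import Reals Lra Lia ZArith List.
From Coquelicot Require Import Coquelicot.
Open Scope R_scope.

(** * Finite sums and elementary calculus *)

Lemma rsum_ext n f g : (forall i, (i < n)%nat -> f i = g i) -> rsum n f = rsum n g.
Proof.
  induction n as [|n IH]; intros H; simpl; [reflexivity|].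
  rewrite IH by (intros; apply H; lia). rewrite H by lia. reflexivity.
Qed.

Lemma rsum_scal k n f : rsum n (fun i => k * f i) = k * rsum n f.
Proof. induction n as [|n IH]; simpl; [ring|rewrite IH; ring]. Qed.

Lemma rsum_const n k : rsum n (fun _ => k) = INR n * k.
Proof. induction n as [|n IH]; simpl rsum; [simpl; ring|rewrite IH, S_INR; ring]. Qed.

Lemma rsum_eq_of_tail_zero m n f :
  (m <= n)%nat -> (forall i, (m <= i)%nat -> f i = 0) -> rsum n f = rsum m f.
Proof.
  intros hmn H. induction hmn as [|n hmn IH]; [reflexivity|].
  simpl. rewrite IH, (H n) by lia. ring.
Qed.

Lemma mean_value_open (f f' : R -> R) a b : a < b ->
  (forall x, a < x < b -> is_derive f x (f' x)) ->
  (forall x, a <= x <= b -> continuity_pt f x) ->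
  exists c, a < c < b /\ f b - f a = f' c * (b - a).
Proof.
  intros hab hd hc.
  assert (pr : forall x, a < x < b -> derivable_pt f x).
  { intros x hx. exists (f' x). apply is_derive_Reals, hd, hx. }
  destruct (MVT f id a b pr (fun x _ => derivable_pt_id x) hab hc) as [c [hc' H]].
  { intros x _. apply derivable_continuous_pt, derivable_pt_id. }
  exists c; split; [exact hc'|].
  rewrite (derive_pt_eq_0 _ _ _ (pr c hc') (proj1 (is_derive_Reals _ _ _) (hd c hc'))),
    (derive_pt_eq_0 _ _ _ _ (derivable_pt_lim_id c)) in H.
  unfold id in H; lra.
Qed.

Lemma nondecreasing_of_derive_nonneg (f f' : R -> R) a b : a <= b ->
  (forall x, a < x < b -> is_derive f x (f' x)) ->
  (forall x, a <= x <= b -> continuity_pt f x) ->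
  (forall x, a < x < b -> 0 <= f' x) -> f a <= f b.
Proof.
  intros hab hd hc hpos. destruct (Req_dec a b) as [->|hne]; [lra|].
  destruct (mean_value_open f f' a b) as [c [hc' H]]; try lra; auto.
  specialize (hpos c hc'). nra.
Qed.

Lemma continuity_pt_fun_const c x : continuity_pt (fun _ : R => c) x.
Proof. apply continuity_pt_const. intros ??. reflexivity. Qed.

Lemma continuity_pt_of_is_derive f x l : is_derive f x l -> continuity_pt f x.
Proof. intros h. apply derivable_continuous_pt. exists l. apply is_derive_Reals, h. Qed.

(* Replaces the [Derive f x] left behind by [auto_derive] with the value given by [D]. *)
Ltac rewrite_Derive D :=
  lazymatch type of D with
  | is_derive _ _ ?l =>
    match goal with
    | |- context [Derive ?g ?y] =>
      replace (Derive g y) with l by (symmetry; apply is_derive_unique, D)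
    end
  end.

Lemma continuity_pt_asin_1 : continuity_pt asin 1.
Proof.
  intros e he.
  set (e' := Rmin e (PI / 4)).
  assert (hpi := PI_RGT_0).
  assert (he' : 0 < e') by (apply Rmin_pos; lra).
  assert (he'e : e' <= e) by apply Rmin_l.
  assert (he'pi : e' <= PI / 4) by apply Rmin_r.
  assert (hcos : cos e' < 1).
  { rewrite <- cos_0. apply cos_decreasing_1; lra. }
  exists (1 - cos e'); split; [lra|].
  intros x [[_ hx] hdx]. simpl in *. unfold R_dist in *. rewrite asin_1.
  destruct (Rle_dec 1 x) as [h1|h1].
  { unfold asin. destruct (Rle_dec x (-1)); [lra|]. destruct (Rle_dec 1 x); [|lra].
    unfold Rminus; rewrite Rplus_opp_r, Rabs_R0; lra. }
  assert (hx1 : cos e' < x) by (apply Rabs_def2 in hdx; lra).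
  assert (hce : 0 < cos e') by (apply cos_gt_0; lra).
  assert (hb := asin_bound x).
  assert (PI / 2 - e' < asin x).
  { destruct (Rlt_dec (PI / 2 - e') (asin x)) as [h|h]; [exact h|exfalso].
    assert (sin (asin x) <= sin (PI / 2 - e')) by (apply sin_incr_1; lra).
    rewrite sin_asin, sin_shift in H; lra. }
  rewrite Rabs_left1; lra.
Qed.

Lemma is_derive_asin x : -1 < x < 1 -> is_derive asin x (/ sqrt (1 - x²)).
Proof.
  intros hx. apply is_derive_Reals, (derive_pt_eq_1 _ _ _ (derivable_pt_asin x hx)).
  rewrite derive_pt_asin. field. apply Rgt_not_eq, sqrt_lt_R0.
  assert (x² < 1) by (unfold Rsqr; nra). lra.
Qed.

(** * The midpoint rule for the quarter disc *)

Definition circ (K x : R) : R := sqrt (K * K - x * x).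

Lemma circ_pos K x : 0 < K * K - x * x -> 0 < circ K x.
Proof. apply sqrt_lt_R0. Qed.

Lemma circ_self K : circ K K = 0.
Proof. unfold circ. rewrite Rminus_diag. apply sqrt_0. Qed.

Lemma is_derive_circ K x : 0 < K * K - x * x -> is_derive (circ K) x (- x / circ K x).
Proof.
  intros h. assert (hs := circ_pos K x h). unfold circ in *.
  auto_derive; [exact h|]. change (K * K + - (x * x)) with (K * K - x * x). field. lra.
Qed.

Lemma continuity_pt_circ K x : 0 <= K * K - x * x -> continuity_pt (circ K) x.
Proof.
  intros h. apply (continuity_pt_comp (fun y => K * K - y * y) sqrt).
  - apply continuity_pt_minus; [apply continuity_pt_fun_const|].
    apply continuity_pt_mult; apply derivable_continuous_pt, derivable_pt_id.
  - apply continuity_pt_sqrt, h.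
Qed.

(* [Phi K x] is the area under [circ K] on [0, x] minus that of the rectangle [x * circ K x]. *)
Definition Phi (K x : R) : R := K * K / 2 * asin (x / K) - x / 2 * circ K x.

Lemma is_derive_Phi K x : 0 < K -> -K < x < K -> is_derive (Phi K) x (x * x / circ K x).
Proof.
  intros hK hx.
  assert (h : 0 < K * K - x * x) by nra.
  assert (hs := circ_pos K x h).
  assert (hs2 : circ K x * circ K x = K * K - x * x) by (apply sqrt_sqrt; lra).
  assert (hy : -1 < x / K < 1).
  { split; [apply Rlt_div_r|apply Rlt_div_l]; lra. }
  assert (E : sqrt (1 - (x / K)²) = circ K x / K).
  { replace (1 - (x / K)²) with ((K * K - x * x) * (/ K * / K)) by (unfold Rsqr; field; lra).
    rewrite sqrt_mult_alt, sqrt_square by (try apply Rlt_le, Rinv_0_lt_compat; lra).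
    reflexivity. }
  assert (Da := is_derive_asin (x / K) hy).
  assert (Dc := is_derive_circ K x h).
  unfold Phi. auto_derive.
  - split; [exists (/ sqrt (1 - (x / K)²)); exact Da|].
    split; [exists (- x / circ K x); exact Dc|exact I].
  - rewrite_Derive Da. rewrite_Derive Dc.
    rewrite E.
    replace (K * K) with (circ K x * circ K x + x * x) by lra.
    field; lra.
Qed.

Lemma continuity_pt_Phi K x : 0 < K -> 0 <= x <= K -> continuity_pt (Phi K) x.
Proof.
  intros hK hx. destruct (Req_dec x K) as [->|hne].
  - unfold Phi. apply continuity_pt_minus; apply continuity_pt_mult.
    + apply continuity_pt_fun_const.
    + apply (continuity_pt_comp (fun y => y / K) asin).
      * apply (continuity_pt_of_is_derive _ _ (/ K)). auto_derive; [lra|ring].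
      * replace (K / K) with 1 by (field; lra). apply continuity_pt_asin_1.
    + apply (continuity_pt_of_is_derive _ _ (/ 2)). auto_derive; [exact I|ring].
    + apply continuity_pt_circ. lra.
  - apply (continuity_pt_of_is_derive _ _ _ (is_derive_Phi K x hK ltac:(lra))).
Qed.

Lemma Phi_0 K : 0 < K -> Phi K 0 = 0.
Proof.
  intros hK. unfold Phi. replace (0 / K) with 0 by (field; lra). rewrite asin_0. field.
Qed.

Lemma Phi_K K : 0 < K -> Phi K K = PI * K * K / 4.
Proof.
  intros hK. unfold Phi. rewrite circ_self. replace (K / K) with 1 by (field; lra).
  rewrite asin_1. field.
Qed.

Lemma Phi_nondecreasing K a b : 0 < K -> 0 <= a <= b -> b <= K -> Phi K a <= Phi K b.
Proof.
  intros hK hab hbK.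
  apply (nondecreasing_of_derive_nonneg (Phi K) (fun x => x * x / circ K x)); try lra.
  - intros x hx. apply is_derive_Phi; lra.
  - intros x hx. apply continuity_pt_Phi; lra.
  - intros x hx. assert (0 < circ K x) by (apply circ_pos; nra).
    apply Rdiv_le_0_compat; nra.
Qed.

Lemma Phi_add_mul_circ_le K a : 0 < K -> 0 <= a <= K ->
  Phi K a + a * circ K a <= PI * K * K / 4.
Proof.
  intros hK ha. rewrite <- Phi_K, <- (Rplus_0_r (Phi K K)), <- (Rmult_0_r a), <- (circ_self K)
    by exact hK.
  apply (nondecreasing_of_derive_nonneg (fun x => Phi K x + a * circ K x)
           (fun x => x * (x - a) / circ K x)); try lra.
  - intros x hx. assert (h : 0 < K * K - x * x) by nra.
    assert (hs := circ_pos K x h). assert (Dp := is_derive_Phi K x hK ltac:(lra)).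
    assert (Dc := is_derive_circ K x h). auto_derive.
    + split; [exists (x * x / circ K x); exact Dp|].
      split; [exists (- x / circ K x); exact Dc|exact I].
    + rewrite_Derive Dp. rewrite_Derive Dc.
      field; lra.
  - intros x hx. apply continuity_pt_plus; [apply continuity_pt_Phi; lra|].
    apply continuity_pt_mult; [apply continuity_pt_fun_const|].
    apply continuity_pt_circ; nra.
  - intros x hx. assert (0 < circ K x) by (apply circ_pos; nra).
    apply Rdiv_le_0_compat; nra.
Qed.

(* [trap K m s] is the error of the trapezoid rule for [circ K] on [m - s, m + s];
   it is nonnegative because [circ K] is concave. *)
Definition trap K m s :=
  Phi K (m + s) + m * circ K (m + s) - Phi K (m - s) - m * circ K (m - s).

Definition trap' K m s := s * (m + s) / circ K (m + s) - s * (m - s) / circ K (m - s).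

Lemma is_derive_trap K m s : 0 < K -> - K < m - s -> m + s < K -> -K < m + s -> m - s < K ->
  is_derive (trap K m) s (trap' K m s).
Proof.
  intros hK h1 h2 h3 h4.
  assert (hp : 0 < K * K - (m + s) * (m + s)) by nra.
  assert (hm : 0 < K * K - (m - s) * (m - s)) by nra.
  assert (sp := circ_pos _ _ hp). assert (sm := circ_pos _ _ hm).
  assert (Dp1 := is_derive_Phi K (m + s) hK ltac:(lra)).
  assert (Dp2 := is_derive_Phi K (m - s) hK ltac:(lra)).
  assert (Dc1 := is_derive_circ K (m + s) hp).
  assert (Dc2 := is_derive_circ K (m - s) hm).
  unfold trap, trap'. auto_derive.
  - repeat split; eexists; eassumption.
  - rewrite_Derive Dp1. rewrite_Derive Dp2. rewrite_Derive Dc1. rewrite_Derive Dc2.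
    field; lra.
Qed.

Lemma continuity_pt_trap K m s : 0 < K -> 0 <= m - s -> m + s <= K -> 0 <= m + s -> m - s <= K ->
  continuity_pt (trap K m) s.
Proof.
  intros hK h1 h2 h3 h4. unfold trap.
  assert (hc : forall f, continuity_pt f (m + s) -> continuity_pt (fun y => f (m + y)) s).
  { intros f hf. apply (continuity_pt_comp (fun y => m + y) f); [|exact hf].
    apply (continuity_pt_of_is_derive _ _ 1). auto_derive; [exact I|ring]. }
  assert (hc' : forall f, continuity_pt f (m - s) -> continuity_pt (fun y => f (m - y)) s).
  { intros f hf. apply (continuity_pt_comp (fun y => m - y) f); [|exact hf].
    apply (continuity_pt_of_is_derive _ _ (-1)). auto_derive; [exact I|ring]. }
  assert (hm : forall f x, continuity_pt f x -> continuity_pt (fun y => m * f y) x).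
  { intros f x hf. apply continuity_pt_mult; [|exact hf].
    apply continuity_pt_fun_const. }
  apply continuity_pt_minus; [apply continuity_pt_minus; [apply continuity_pt_plus|]|].
  - apply hc, continuity_pt_Phi; lra.
  - apply (hm (fun y => circ K (m + y))), hc, continuity_pt_circ; nra.
  - apply hc', continuity_pt_Phi; lra.
  - apply (hm (fun y => circ K (m - y))), hc', continuity_pt_circ; nra.
Qed.

Lemma trap'_nonneg K m s : 0 < K -> 0 <= s -> 0 <= m - s -> m + s < K -> 0 <= trap' K m s.
Proof.
  intros hK h0 h1 h2. unfold trap'.
  assert (sp : 0 < circ K (m + s)) by (apply circ_pos; nra).
  assert (sm : 0 < circ K (m - s)) by (apply circ_pos; nra).
  assert (circ K (m + s) <= circ K (m - s)) by (apply sqrt_le_1_alt; nra).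
  assert (s * (m - s) / circ K (m - s) <= s * (m + s) / circ K (m + s)).
  { apply Rmult_le_compat; try nra.
    - apply Rlt_le, Rinv_0_lt_compat, sm.
    - apply Rinv_le_contravar; assumption. }
  lra.
Qed.

Lemma trap_0 K m : trap K m 0 = 0.
Proof. unfold trap. rewrite Rplus_0_r, Rminus_0_r. ring. Qed.

Lemma trap_nondecreasing K m a b : 0 < K -> 0 <= a <= b -> b <= m -> m + b <= K ->
  trap K m a <= trap K m b.
Proof.
  intros hK hab hbm hmb.
  apply (nondecreasing_of_derive_nonneg (trap K m) (trap' K m)); try lra.
  - intros s hs. apply is_derive_trap; lra.
  - intros s hs. apply continuity_pt_trap; lra.
  - intros s hs. apply trap'_nonneg; lra.
Qed.

Lemma trap_half_nonneg K m : 0 < K -> /2 <= m -> m + /2 <= K -> 0 <= trap K m (/2).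
Proof. intros. rewrite <- (trap_0 K m). apply trap_nondecreasing; lra. Qed.

Lemma trap'_ge K m s : 16 <= K -> K / 2 <= m -> 0 <= K - (m + /2) <= /100 -> /4 < s < /2 ->
  sqrt K / 48 <= trap' K m s.
Proof.
  intros hK hm he hs.
  set (t := sqrt K).
  assert (ht : 0 < t) by (apply sqrt_lt_R0; lra).
  assert (htt : t * t = K) by (apply sqrt_sqrt; lra).
  assert (sp : 0 < circ K (m + s)) by (apply circ_pos; nra).
  assert (hsp : / circ K (m + s) >= 4 / 3 / t).
  { replace (4 / 3 / t) with (/ (3 / 4 * t)) by (field; lra).
    apply Rle_ge, Rinv_le_contravar; [exact sp|].
    unfold t. rewrite <- (sqrt_square (3 / 4)), <- sqrt_mult_alt by lra.
    apply sqrt_le_1_alt. nra. }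
  assert (hsm : / circ K (m - s) <= 7 / 6 / t).
  { replace (7 / 6 / t) with (/ (6 / 7 * t)) by (field; lra).
    apply Rinv_le_contravar; [lra|].
    unfold t. rewrite <- (sqrt_square (6 / 7)), <- sqrt_mult_alt by lra.
    apply sqrt_le_1_alt. nra. }
  assert (h1 : s * m * (4 / 3 / t) <= s * (m + s) / circ K (m + s)).
  { apply Rmult_le_compat; try nra. apply Rlt_le, Rdiv_lt_0_compat; lra. }
  assert (h2 : s * (m - s) / circ K (m - s) <= s * m * (7 / 6 / t)).
  { apply Rmult_le_compat; try nra.
    - apply Rlt_le, Rinv_0_lt_compat, circ_pos. nra. }
  assert (h3 : t / 48 <= s * m * (4 / 3 / t) - s * m * (7 / 6 / t)).
  { replace (s * m * (4 / 3 / t) - s * m * (7 / 6 / t)) with (s * m / 6 / t) by (field; lra).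
    replace (t / 48) with (t * t / 48 / t) by (field; lra).
    apply Rmult_le_compat_r; [apply Rlt_le, Rinv_0_lt_compat, ht|nra]. }
  unfold trap'. fold t. lra.
Qed.

(* Near the rim [circ K] has slope of order [sqrt K], so the trapezoid error over the last
   full unit interval is of order [sqrt K]. *)
Lemma trap_half_ge K m : 16 <= K -> K / 2 <= m -> 0 <= K - (m + /2) <= /100 ->
  sqrt K / 192 <= trap K m (/2).
Proof.
  intros hK hm he.
  assert (hq : 0 <= trap K m (/4)) by (rewrite <- (trap_0 K m); apply trap_nondecreasing; lra).
  destruct (mean_value_open (trap K m) (trap' K m) (/4) (/2)) as [s [hs Hs]]; try lra.
  - intros s hs. apply is_derive_trap; lra.
  - intros s hs. apply continuity_pt_trap; lra.
  - assert (sqrt K / 48 <= trap' K m s) by (apply trap'_ge; lra). nra.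
Qed.

(* [partial_defect K p] is the area under [circ K] on [0, p + 1/2] minus the midpoint sum
   [sum_(i < p) circ K (i + 1/2)] minus [circ K (p + 1/2) / 2]. *)
Definition partial_defect K p :=
  Phi K (INR p + /2) + INR p * circ K (INR p + /2) - rsum p (fun i => circ K (INR i + /2)).

Lemma partial_defect_S K p :
  partial_defect K (S p) = partial_defect K p + trap K (INR (S p)) (/2).
Proof.
  unfold partial_defect, trap. simpl rsum. rewrite S_INR.
  replace (INR p + 1 - /2) with (INR p + /2) by field.
  replace (INR p + 1 + /2) with (INR p + /2 + 1) by field. ring.
Qed.

Lemma partial_defect_nonneg K p : 0 < K -> INR p + /2 <= K -> 0 <= partial_defect K p.
Proof.
  intros hK. induction p as [|p IH]; intros hp.
  - unfold partial_defect. simpl rsum. simpl INR in *.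
    assert (Phi K 0 <= Phi K (0 + /2)) by (apply Phi_nondecreasing; lra).
    rewrite Phi_0 in H by exact hK. lra.
  - rewrite partial_defect_S. rewrite S_INR in hp. assert (0 <= INR p) by apply pos_INR.
    assert (0 <= partial_defect K p) by (apply IH; lra).
    assert (0 <= trap K (INR (S p)) (/2)) by (apply trap_half_nonneg; rewrite ?S_INR; lra).
    lra.
Qed.

Definition lattice_defect K M := PI * K * K / 4 - rsum M (fun i => circ K (INR i + /2)).

(* The defect is the sum of the trapezoid errors up to [k - 3/2], the last full one, which
   [trap_half_ge] bounds below, and the sliver [[k - 1/2, K]] of width [eps], which costs at
   most [circ K (k - 1/2) / 2 = O (sqrt (eps K))]. *)
Lemma lattice_defect_ge K k eps M : (2 <= k)%nat -> (k <= M)%nat ->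
  K = INR k - /2 + eps -> 0 <= eps <= /100000 -> 16 <= K ->
  sqrt K / 384 <= lattice_defect K M.
Proof.
  intros hk hkM hK he hK16. unfold lattice_defect.
  rewrite (rsum_eq_of_tail_zero k M) by (try exact hkM; intros i hi; unfold circ;
    apply sqrt_neg_0; apply le_INR in hi; nra).
  destruct k as [|[|q]]; [lia|lia|]. rewrite (S_INR (S q)) in hK.
  set (a := INR (S q) + /2).
  assert (E : PI * K * K / 4 - rsum (S (S q)) (fun i => circ K (INR i + /2)) =
     partial_defect K q + trap K (INR (S q)) (/2)
     + (PI * K * K / 4 - Phi K a - a * circ K a) - /2 * circ K a).
  { rewrite <- partial_defect_S. unfold partial_defect. cbn [rsum]. fold a. unfold a. lra. }
  assert (ha : a = K - eps) by (unfold a; lra).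
  rewrite E, S_INR in *.
  assert (hq : 0 <= INR q) by apply pos_INR.
  assert (h1 : 0 <= partial_defect K q) by (apply partial_defect_nonneg; lra).
  assert (h2 : sqrt K / 192 <= trap K (INR q + 1) (/2)) by (apply trap_half_ge; lra).
  assert (h3 := Phi_add_mul_circ_le K a ltac:(lra) ltac:(lra)).
  assert (h4 : circ K a <= / 192 * sqrt K).
  { unfold circ. rewrite <- (sqrt_square (/192)), <- sqrt_mult_alt by lra.
    apply sqrt_le_1_alt. rewrite ha. nra. }
  lra.
Qed.

(** * Integrals over the circle *)

Lemma is_RInt_zero a b : is_RInt (fun _ => 0) a b 0.
Proof.
  assert (H := is_RInt_const a b 0).
  change (scal (b - a) 0) with ((b - a) * 0) in H. rewrite Rmult_0_r in H. exact H.
Qed.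

Lemma is_RInt_rsum (F : nat -> R -> R) (v : nat -> R) a b M :
  (forall i, (i < M)%nat -> is_RInt (F i) a b (v i)) ->
  is_RInt (fun x => rsum M (fun i => F i x)) a b (rsum M v).
Proof.
  induction M as [|M IH]; intros H; [apply is_RInt_zero|].
  exact (is_RInt_plus _ _ _ _ _ _ (IH (fun i hi => H i ltac:(lia))) (H M ltac:(lia))).
Qed.

Lemma is_RInt_of_pieces (u P : R -> R) (L : list R) a b : a <= b ->
  (forall p q, a <= p -> p < q -> q <= b -> (forall x, In x L -> ~ p < x < q) ->
     is_RInt u p q (P q - P p)) ->
  is_RInt u a b (P b - P a).
Proof.
  revert a b. induction L as [|x L IH]; intros a b hab H.
  - destruct (Req_dec a b) as [->|hne].
    + rewrite Rminus_diag. apply (is_RInt_point u b).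
    + apply H; try lra. intros x [].
  - assert (HL : forall a' b', a <= a' -> b' <= b -> a' <= b' -> ~ a' < x < b' ->
                is_RInt u a' b' (P b' - P a')).
    { intros a' b' ha hb hab' hx. apply IH; [exact hab'|].
      intros p q hp hpq hq hpq'. apply H; try lra.
      intros y [<-|hy]; [lra|exact (hpq' y hy)]. }
    destruct (Rlt_dec a x) as [h1|h1]; [destruct (Rlt_dec x b) as [h2|h2]|].
    + replace (P b - P a) with ((P x - P a) + (P b - P x)) by ring.
      apply (is_RInt_Chasles u a x b); apply HL; lra.
    + apply HL; lra.
    + apply HL; lra.
Qed.

Lemma is_RInt_shift (f : R -> R) a b v l :
  is_RInt f (a + v) (b + v) l -> is_RInt (fun y => f (y + v)) a b l.
Proof.
  intros H. assert (H' := is_RInt_comp_lin f 1 v a b l).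
  rewrite !Rmult_1_l in H'. specialize (H' H).
  apply (is_RInt_ext (fun y => scal 1 (f (1 * y + v)))); [|exact H'].
  intros y _. change (1 * f (1 * y + v) = f (y + v)). rewrite !Rmult_1_l. reflexivity.
Qed.

Lemma cos_Rabs y : cos (Rabs y) = cos y.
Proof. unfold Rabs. destruct (Rcase_abs y); [apply cos_neg|reflexivity]. Qed.

Section Cap.

Variables r c : R.
Hypotheses (hc : 0 < c) (hcr : c <= r).

Let al := acos (c / r).

Lemma cap_angle : 0 <= al < PI / 2 /\ r * cos al = c /\ r * sin al = sqrt (r * r - c * c).
Proof.
  assert (hcr' : 0 < c / r <= 1).
  { split; [apply Rdiv_lt_0_compat; lra|apply Rle_div_l; lra]. }
  assert (hb := acos_bound (c / r)).
  assert (hcos : cos al = c / r) by (apply cos_acos; lra).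
  split; [split; [unfold al; lra|]|split; [rewrite hcos; field; lra|]].
  - destruct (Rlt_dec al (PI / 2)) as [h|h]; [exact h|exfalso].
    assert (cos al <= 0) by (apply cos_le_0; unfold al in *; lra).
    lra.
  - unfold al. rewrite sin_acos by lra.
    replace (r * r - c * c) with (r * r * (1 - (c / r)²)) by (unfold Rsqr; field; lra).
    rewrite sqrt_mult_alt, sqrt_square by nra. reflexivity.
Qed.

Lemma cap_inside y : Rabs y < al -> c < r * cos y.
Proof.
  intros hy. destruct cap_angle as [hal [hcal _]]. rewrite <- hcal.
  apply Rmult_lt_compat_l; [lra|].
  pose proof (Rabs_pos y). pose proof PI_RGT_0.
  rewrite <- (cos_Rabs y). apply cos_decreasing_1; lra.
Qed.

Lemma cap_outside y : al < Rabs y <= PI -> r * cos y < c.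
Proof.
  intros hy. destruct cap_angle as [hal [hcal _]]. rewrite <- hcal.
  apply Rmult_lt_compat_l; [lra|].
  rewrite <- (cos_Rabs y). apply cos_decreasing_1; lra.
Qed.

(* A primitive of the cap [r cos y] restricted to [|y| <= al]. *)
Let P (y : R) := r * sin (Rmax (- al) (Rmin al y)).

Lemma is_RInt_cap_centered (u : R -> R) a b :
  (forall y, c < r * cos y -> u y = r * cos y) -> (forall y, r * cos y < c -> u y = 0) ->
  - PI <= a -> a <= b -> b <= PI -> is_RInt u a b (P b - P a).
Proof.
  intros hu1 hu0 ha hab hb. destruct cap_angle as [hal _]. assert (hpi := PI_RGT_0).
  apply (is_RInt_of_pieces u P (- al :: al :: nil)); [exact hab|].
  intros p q hp hpq hq hL.
  assert (N1 : - al <= p \/ q <= - al).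
  { destruct (Rle_dec (- al) p); [left; lra|]. destruct (Rle_dec q (- al)); [right; lra|].
    exfalso. apply (hL (- al)); [left; reflexivity|lra]. }
  assert (N2 : al <= p \/ q <= al).
  { destruct (Rle_dec al p); [left; lra|]. destruct (Rle_dec q al); [right; lra|].
    exfalso. apply (hL al); [right; left; reflexivity|lra]. }
  assert (hP : forall y, - al <= y <= al -> P y = r * sin y).
  { intros y hy. unfold P. rewrite Rmin_right, Rmax_right by lra. reflexivity. }
  destruct (Rle_dec q (- al)) as [h|h]; [|destruct (Rle_dec q al) as [h'|h']].
  - replace (P q - P p) with 0.
    2: { unfold P. rewrite (Rmin_right al q), (Rmin_right al p), !Rmax_left by lra. ring. }
    apply (is_RInt_ext (fun _ => 0)); [|apply is_RInt_zero].
    intros y hy. rewrite Rmin_left, Rmax_right in hy by lra.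
    symmetry. apply hu0, cap_outside. rewrite Rabs_left; lra.
  - rewrite (hP p), (hP q) by lra.
    apply (is_RInt_ext (fun y => r * cos y)).
    + intros y hy. rewrite Rmin_left, Rmax_right in hy by lra.
      symmetry. apply hu1, cap_inside. apply Rabs_def1; lra.
    + apply (is_RInt_derive (fun y => r * sin y)).
      * intros y _. auto_derive; [exact I|ring].
      * intros y _. apply (ex_derive_continuous (fun y => r * cos y)). auto_derive. exact I.
  - replace (P q - P p) with 0.
    2: { unfold P. rewrite !Rmin_left by lra. rewrite !Rmax_right by lra. ring. }
    apply (is_RInt_ext (fun _ => 0)); [|apply is_RInt_zero].
    intros y hy. rewrite Rmin_left, Rmax_right in hy by lra.
    symmetry. apply hu0, cap_outside. rewrite Rabs_right; lra.
Qed.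

Lemma is_RInt_cap (u : R -> R) th : - PI <= th <= PI ->
  (forall x, c < r * cos (x - th) -> u x = r * cos (x - th)) ->
  (forall x, r * cos (x - th) < c -> u x = 0) ->
  is_RInt u 0 (2 * PI) (2 * sqrt (r * r - c * c)).
Proof.
  intros hth hu1 hu0. assert (hpi := PI_RGT_0). destruct cap_angle as [hal [_ hsal]].
  set (w := fun y => u (y + th)).
  assert (hw1 : forall y, c < r * cos y -> w y = r * cos y).
  { intros y hy. unfold w. rewrite hu1; replace (y + th - th) with y by ring;
      [reflexivity|exact hy]. }
  assert (hw0 : forall y, r * cos y < c -> w y = 0).
  { intros y hy. unfold w. apply hu0. replace (y + th - th) with y by ring. exact hy. }
  assert (hcos : forall y, cos (y + 2 * PI) = cos y).
  { intros y. rewrite cos_plus, cos_2PI, sin_2PI. ring. }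
  (* Split the period [-th, 2 PI - th] at [PI] and shift its second part back by [2 PI]. *)
  assert (Hw : is_RInt w (- th) (2 * PI - th) (P PI - P (- PI))).
  { replace (P PI - P (- PI)) with ((P PI - P (- th)) + (P (- th) - P (- PI))) by ring.
    apply (is_RInt_Chasles w (- th) PI (2 * PI - th));
      [apply is_RInt_cap_centered; auto; lra|].
    apply (is_RInt_ext (fun y => w (y + - (2 * PI) + 2 * PI))).
    { intros y _. f_equal. ring. }
    apply (is_RInt_shift (fun y => w (y + 2 * PI))).
    replace (PI + - (2 * PI)) with (- PI) by ring.
    replace (2 * PI - th + - (2 * PI)) with (- th) by ring.
    apply is_RInt_cap_centered; try lra.
    - intros y hy. rewrite hw1, hcos; [reflexivity|now rewrite hcos].
    - intros y hy. apply hw0. now rewrite hcos. }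
  assert (HP : P PI - P (- PI) = 2 * sqrt (r * r - c * c)).
  { unfold P. rewrite Rmin_left, Rmax_right, Rmin_right, Rmax_left, sin_neg by lra. lra. }
  rewrite <- HP.
  apply (is_RInt_ext (fun y => w (y + - th))).
  { intros y _. unfold w. f_equal. ring. }
  apply is_RInt_shift. rewrite Rplus_0_l. exact Hw.
Qed.

End Cap.

Lemma unit_vector_angle ex ey : ex ^ 2 + ey ^ 2 = 1 ->
  exists th, - PI <= th <= PI /\ forall r x, r * cos x * ex + r * sin x * ey = r * cos (x - th).
Proof.
  intros h. assert (hb : -1 <= ex <= 1) by nra.
  assert (hs : sqrt (1 - ex²) = Rabs ey).
  { replace (1 - ex²) with (ey * ey) by (unfold Rsqr; nra). apply sqrt_Rsqr_abs. }
  assert (hab := acos_bound ex).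
  destruct (Rle_dec 0 ey) as [hey|hey].
  - exists (acos ex). split; [lra|]. intros r x.
    rewrite cos_minus, cos_acos, sin_acos, hs, Rabs_right by lra. ring.
  - exists (- acos ex). split; [lra|]. intros r x.
    rewrite cos_minus, cos_neg, sin_neg, cos_acos, sin_acos, hs, Rabs_left by lra. ring.
Qed.

Lemma is_RInt_cap_dir r c ex ey (u : R -> R) : 0 < r -> 0 < c -> ex ^ 2 + ey ^ 2 = 1 ->
  (forall x, c < r * cos x * ex + r * sin x * ey -> u x = r * cos x * ex + r * sin x * ey) ->
  (forall x, r * cos x * ex + r * sin x * ey < c -> u x = 0) ->
  is_RInt u 0 (2 * PI) (2 * sqrt (r * r - c * c)).
Proof.
  intros hr hc he hu1 hu0. destruct (unit_vector_angle ex ey he) as [th [hth Hth]].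
  assert (hv1 : forall x, c < r * cos (x - th) -> u x = r * cos (x - th))
    by (intros x; rewrite <- Hth; apply hu1).
  assert (hv0 : forall x, r * cos (x - th) < c -> u x = 0) by (intros x; rewrite <- Hth; apply hu0).
  destruct (Rle_dec c r) as [hcr|hcr].
  - exact (is_RInt_cap r c hc hcr u th hth hv1 hv0).
  - rewrite sqrt_neg_0, Rmult_0_r by nra.
    apply (is_RInt_ext (fun _ => 0)); [|apply is_RInt_zero].
    intros x _. symmetry. apply hv0. assert (cos (x - th) <= 1) by apply COS_bound. nra.
Qed.

Lemma is_RInt_sqr_dir r ex ey : ex ^ 2 + ey ^ 2 = 1 ->
  is_RInt (fun x => (r * cos x * ex + r * sin x * ey) * (r * cos x * ex + r * sin x * ey))
    0 (2 * PI) (PI * r * r).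
Proof.
  intros he. destruct (unit_vector_angle ex ey he) as [th [_ Hth]].
  apply (is_RInt_ext (fun x => r * cos (x - th) * (r * cos (x - th)))).
  { intros x _. rewrite Hth. reflexivity. }
  set (G := fun x => r * r / 2 * (x - th + sin (x - th) * cos (x - th))).
  replace (PI * r * r) with (G (2 * PI) - G 0).
  2: { unfold G. replace (2 * PI - th) with (0 - th + 2 * PI) by ring.
       rewrite sin_plus, cos_plus, sin_2PI, cos_2PI. field. }
  apply (is_RInt_derive G).
  - intros x _. unfold G. auto_derive; [exact I|].
    assert (hsc := sin2_cos2 (x - th)). unfold Rsqr in hsc.
    change (x + - th) with (x - th). nra.
  - intros x _. apply (ex_derive_continuous (fun x => r * cos (x - th) * (r * cos (x - th)))).
    auto_derive. exact I.
Qed.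

(** * The quantizer as a sum of levels *)

Lemma rsum_level_count y M :
  rsum M (fun i => (if Rle_dec (INR i + /2) y then 1 else 0)
                   - (if Rlt_dec (INR i + /2) (- y) then 1 else 0)) =
  IZR (Z.max (- Z.of_nat M) (Z.min (Z.of_nat M) (Zfloor (y + /2)))).
Proof.
  destruct (Zfloor_bound (y + /2)) as [hlo hhi]. set (n := Zfloor (y + /2)) in *.
  induction M as [|M IH].
  - simpl. now replace (Z.max 0 (Z.min 0 n)) with 0%Z by lia.
  - cbn [rsum]. rewrite IH, INR_IZR_INZ, Nat2Z.inj_succ.
    set (z := Z.of_nat M). assert (hz : 0 <= IZR z) by (apply IZR_le; lia).
    set (m := Z.max (- z) (Z.min z n)).
    destruct (Rle_dec (IZR z + /2) y) as [h1|h1];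
      destruct (Rlt_dec (IZR z + /2) (- y)) as [h2|h2].
    + lra.
    + assert (hn : (z < n)%Z) by (apply lt_IZR; lra).
      replace (Z.max (- Z.succ z) (Z.min (Z.succ z) n)) with (m + 1)%Z by lia.
      rewrite plus_IZR. ring.
    + assert (hn : (n < - z)%Z) by (apply lt_IZR; rewrite opp_IZR; lra).
      replace (Z.max (- Z.succ z) (Z.min (Z.succ z) n)) with (m - 1)%Z by lia.
      rewrite minus_IZR. ring.
    + assert (hn1 : (n < z + 1)%Z) by (apply lt_IZR; rewrite plus_IZR; lra).
      assert (hn2 : (- z - 1 < n)%Z) by (apply lt_IZR; rewrite minus_IZR, opp_IZR; lra).
      replace (Z.max (- Z.succ z) (Z.min (Z.succ z) n)) with m by lia. ring.
Qed.

Definition upper_part (c t : R) := if Rle_dec c t then t else 0.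
Definition lower_part (c t : R) := if Rlt_dec c (- t) then - t else 0.

(* [Qd d t / d] counts the levels [d (i + 1/2)] below [t] minus those below [- t]. *)
Lemma mul_Qd_layers d t M : 0 < d -> Rabs t <= d * INR M ->
  t * Qd d t =
  d * rsum M (fun i => upper_part (d * (INR i + /2)) t + lower_part (d * (INR i + /2)) t).
Proof.
  intros hd ht. set (y := t / d).
  assert (hty : t = d * y) by (unfold y; field; lra).
  assert (hy : Rabs y <= INR M).
  { unfold y, Rdiv. rewrite Rabs_mult, Rabs_inv, (Rabs_right d) by lra.
    apply (Rmult_le_reg_r d); [lra|]. rewrite Rmult_assoc, Rinv_l by lra. lra. }
  destruct (Zfloor_bound (y + /2)) as [hlo hhi].
  assert (hclamp : Z.max (- Z.of_nat M) (Z.min (Z.of_nat M) (Zfloor (y + /2))) = Zfloor (y + /2)).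
  { rewrite INR_IZR_INZ in hy. apply Rabs_le_between in hy.
    assert (h1 : (Zfloor (y + /2) < Z.of_nat M + 1)%Z) by (apply lt_IZR; rewrite plus_IZR; lra).
    assert (h2 : (- Z.of_nat M - 1 < Zfloor (y + /2))%Z)
      by (apply lt_IZR; rewrite minus_IZR, opp_IZR; lra).
    lia. }
  (* [Defs.Zfloor] and the standard [Zfloor] are the same function [up x - 1]. *)
  unfold Qd. fold y. change (Defs.Zfloor (y + /2)) with (Zfloor (y + /2)).
  rewrite <- hclamp, <- rsum_level_count, Rmult_comm, Rmult_assoc.
  f_equal. rewrite Rmult_comm, <- rsum_scal. apply rsum_ext.
  intros i _. rewrite hty. unfold upper_part, lower_part.
  assert (0 <= INR i) by apply pos_INR.
  destruct (Rle_dec (INR i + /2) y); destruct (Rle_dec (d * (INR i + /2)) (d * y)); try nra;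
  destruct (Rlt_dec (INR i + /2) (- y)); destruct (Rlt_dec (d * (INR i + /2)) (- (d * y)));
  nra.
Qed.

Definition err_corr (d t : R) := t * (t - Qd d t).

Lemma sqrt_mul_sqr c x : 0 <= c -> sqrt (c * c * x) = c * sqrt x.
Proof.
  intros hc. destruct (Rle_dec 0 x).
  - rewrite sqrt_mult_alt, sqrt_square by nra. reflexivity.
  - rewrite !sqrt_neg_0 by nra. ring.
Qed.

Lemma lattice_defect_scale r d M : 0 < d ->
  PI * r * r - 4 * d * rsum M (fun i => sqrt (r * r - d * (INR i + /2) * (d * (INR i + /2)))) =
  4 * d * d * lattice_defect (r / d) M.
Proof.
  intros hd. unfold lattice_defect.
  rewrite (rsum_ext M _ (fun i => d * circ (r / d) (INR i + /2))), rsum_scal.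
  - field. lra.
  - intros i _. unfold circ. rewrite <- sqrt_mul_sqr by lra. f_equal. field. lra.
Qed.

Lemma is_RInt_err_corr r d M ex ey : 0 < r -> 0 < d -> r <= d * INR M -> ex ^ 2 + ey ^ 2 = 1 ->
  is_RInt (fun x => err_corr d (r * cos x * ex + r * sin x * ey)) 0 (2 * PI)
    (4 * d * d * lattice_defect (r / d) M).
Proof.
  intros hr hd hM he. rewrite <- lattice_defect_scale by exact hd.
  set (t := fun x => r * cos x * ex + r * sin x * ey).
  set (lv := fun i => d * (INR i + /2)).
  assert (hlv : forall i, 0 < lv i).
  { intros i. unfold lv. assert (0 <= INR i) by apply pos_INR. nra. }
  assert (ht : forall x, Rabs (t x) <= d * INR M).
  { intros x. destruct (unit_vector_angle ex ey he) as [th [_ Hth]]. unfold t. rewrite Hth.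
    apply Rle_trans with r; [|exact hM]. assert (hb := COS_bound (x - th)).
    apply Rabs_le; split; nra. }
  apply (is_RInt_ext (fun x => t x * t x + - d * rsum M (fun i =>
           upper_part (lv i) (t x) + lower_part (lv i) (t x)))).
  { intros x _. unfold err_corr. fold (t x).
    rewrite Rmult_minus_distr_l, (mul_Qd_layers d (t x) M hd (ht x)).
    unfold lv. lra. }
  change (fun i => sqrt (r * r - d * (INR i + /2) * (d * (INR i + /2))))
    with (fun i => sqrt (r * r - lv i * lv i)).
  replace (PI * r * r - 4 * d * rsum M (fun i => sqrt (r * r - lv i * lv i)))
    with (PI * r * r + - d * rsum M (fun i =>
            2 * sqrt (r * r - lv i * lv i) + 2 * sqrt (r * r - lv i * lv i))).
  2: { rewrite (rsum_ext M _ (fun i => 4 * sqrt (r * r - lv i * lv i))) by (intros; ring).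
       rewrite rsum_scal. ring. }
  apply (is_RInt_plus (V := R_NormedModule)); [apply is_RInt_sqr_dir, he|].
  apply (is_RInt_scal (V := R_NormedModule)), (is_RInt_rsum
    (fun i x => upper_part (lv i) (t x) + lower_part (lv i) (t x))).
  intros i _. apply (is_RInt_plus (V := R_NormedModule)).
  - apply (is_RInt_cap_dir r (lv i) ex ey); auto.
    + intros x hx. unfold upper_part, t. destruct (Rle_dec _ _); [reflexivity|unfold t in hx; lra].
    + intros x hx. unfold upper_part, t. destruct (Rle_dec _ _); [unfold t in hx; lra|reflexivity].
  - apply (is_RInt_cap_dir r (lv i) (- ex) (- ey)); auto.
    + rewrite <- he. ring.
    + intros x hx. unfold lower_part, t. destruct (Rlt_dec _ _); [ring|exfalso; lra].
    + intros x hx. unfold lower_part, t. destruct (Rlt_dec _ _); [lra|reflexivity].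
Qed.

(** * The frame estimate *)

(* Tightness turns the correlation of [x] with the quantization errors into the inner product
   of [x] with the reconstruction error, which Cauchy-Schwarz bounds. *)
Lemma frame_err_corr_le d N ex ey x1 x2 : UNTF N ex ey ->
  2 / INR N * rsum N (fun j => err_corr d (x1 * ex j + x2 * ey j)) <=
  sqrt (x1 * x1 + x2 * x2) * Ed d N ex ey x1 x2.
Proof.
  intros [hN [_ [hxx [hyy hxy]]]].
  assert (hNp : 0 < INR N) by (apply lt_0_INR; exact hN).
  set (c := fun j => Qd d (x1 * ex j + x2 * ey j)).
  assert (E : rsum N (fun j => err_corr d (x1 * ex j + x2 * ey j)) =
     x1 * x1 * rsum N (fun j => ex j * ex j) + 2 * (x1 * x2) * rsum N (fun j => ex j * ey j)
     + x2 * x2 * rsum N (fun j => ey j * ey j)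
     - (x1 * rsum N (fun j => c j * ex j) + x2 * rsum N (fun j => c j * ey j))).
  { clear hN hxx hyy hxy hNp. unfold c, err_corr.
    induction N as [|N IH]; simpl; [ring|rewrite IH; ring]. }
  rewrite hxx, hyy, hxy in E.
  set (y1 := x1 - 2 / INR N * rsum N (fun j => c j * ex j)).
  set (y2 := x2 - 2 / INR N * rsum N (fun j => c j * ey j)).
  change (Ed d N ex ey x1 x2) with (sqrt (y1 ^ 2 + y2 ^ 2)).
  replace (2 / INR N * rsum N (fun j => err_corr d (x1 * ex j + x2 * ey j)))
    with (x1 * y1 + x2 * y2) by (rewrite E; unfold y1, y2; field; lra).
  replace (y1 ^ 2 + y2 ^ 2) with (y1² + y2²) by (unfold Rsqr; ring).
  replace (x1 * x1 + x2 * x2) with (x1² + x2²) by reflexivity.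
  apply sqrt_cauchy.
Qed.

Lemma err_corr_avg_le_Ed d r N ex ey x : UNTF N ex ey -> 0 < r ->
  2 / (INR N * r) * rsum N (fun j => err_corr d (r * cos x * ex j + r * sin x * ey j)) <=
  Ed d N ex ey (r * cos x) (r * sin x).
Proof.
  intros hF hr. assert (hNp : 0 < INR N) by (apply lt_0_INR, hF).
  assert (hx : sqrt (r * cos x * (r * cos x) + r * sin x * (r * sin x)) = r).
  { assert (hsc := sin2_cos2 x). unfold Rsqr in hsc.
    replace (r * cos x * (r * cos x) + r * sin x * (r * sin x)) with (r * r) by nra.
    apply sqrt_square; lra. }
  assert (Hf := frame_err_corr_le d N ex ey (r * cos x) (r * sin x) hF). rewrite hx in Hf.
  replace (2 / (INR N * r)) with (/ r * (2 / INR N)) by (field; lra).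
  rewrite Rmult_assoc. apply (Rmult_le_reg_l r); [lra|].
  rewrite <- Rmult_assoc, Rinv_r, Rmult_1_l by lra. exact Hf.
Qed.

(* With [h] the left-hand side above, [E_delta^2 >= 2 a h - a^2]; take [a = J / (4 r)]. *)
Lemma sqrt_RiemannInt_Ed2_ge d r N ex ey J
  (pr : Riemann_integrable (Ed2 d r N ex ey) 0 (2 * PI)) :
  UNTF N ex ey -> 0 < r -> 0 <= J ->
  (forall j, (j < N)%nat ->
     is_RInt (fun x => err_corr d (r * cos x * ex j + r * sin x * ey j)) 0 (2 * PI) J) ->
  J / (2 * r) <= sqrt (RiemannInt pr).
Proof.
  intros hF hr hJ hint. assert (hNp : 0 < INR N) by (apply lt_0_INR, hF).
  assert (hpi4 := PI_4).
  set (a := J / (4 * r)). assert (ha : 0 <= a) by (apply Rdiv_le_0_compat; lra).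
  set (h := fun x =>
    2 / (INR N * r) * rsum N (fun j => err_corr d (r * cos x * ex j + r * sin x * ey j))).
  assert (Ih : is_RInt (fun x => 2 * a * h x + - (a * a)) 0 (2 * PI)
                 (2 * a * (2 / (INR N * r) * rsum N (fun _ => J)) + (2 * PI - 0) * - (a * a))).
  { apply (is_RInt_plus (V := R_NormedModule)); [|exact (is_RInt_const 0 (2 * PI) (- (a * a)))].
    do 2 apply (is_RInt_scal (V := R_NormedModule)).
    apply (is_RInt_rsum (fun j x => err_corr d (r * cos x * ex j + r * sin x * ey j))), hint. }
  assert (hle : forall x, 2 * a * h x + - (a * a) <= Ed2 d r N ex ey x).
  { intros x. unfold Ed2. set (E := Ed d N ex ey (r * cos x) (r * sin x)).
    assert (hhE : h x <= E) by exact (err_corr_avg_le_Ed d r N ex ey x hF hr).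
    assert (0 <= (E - a) * (E - a)) by apply Rle_0_sqr.
    assert (a * h x <= a * E) by (apply Rmult_le_compat_l; lra). nra. }
  assert (Hmono := RInt_le _ _ 0 (2 * PI) ltac:(pose PI_RGT_0; lra) (ex_intro _ _ Ih)
                     (ex_RInt_Reals_1 _ _ _ pr) (fun x _ => hle x)).
  rewrite (is_RInt_unique _ _ _ _ Ih), (RInt_Reals _ _ _ pr), rsum_const in Hmono.
  rewrite <- (sqrt_square (J / (2 * r))) by (apply Rdiv_le_0_compat; lra).
  apply sqrt_le_1_alt. eapply Rle_trans; [|exact Hmono].
  unfold a.
  replace (2 * (J / (4 * r)) * (2 / (INR N * r) * (INR N * J))
           + (2 * PI - 0) * - (J / (4 * r) * (J / (4 * r))))
    with (J / r * (J / r) * (1 - PI / 8)) by (field; lra).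
  replace (J / (2 * r) * (J / (2 * r))) with (J / r * (J / r) * / 4) by (field; lra).
  apply Rmult_le_compat_l; [apply Rle_0_sqr|lra].
Qed.

Lemma mul_sqrt_div_sqrt c r d : 0 < r -> 0 < d ->
  c * (d * sqrt d) / sqrt r = c * (d * d * sqrt (r / d)) / r.
Proof.
  intros hr hd. rewrite sqrt_div_alt by exact hd.
  assert (hsd := sqrt_lt_R0 d hd). assert (hsr := sqrt_lt_R0 r hr).
  assert (ed := sqrt_sqrt d (Rlt_le _ _ hd)). assert (er := sqrt_sqrt r (Rlt_le _ _ hr)).
  set (a := sqrt d) in *. set (b := sqrt r) in *. rewrite <- ed, <- er. field. lra.
Qed.

Theorem theorem1p2 :
  exists eps0 C : R, 0 < eps0 /\ 0 < C /\
  exists R0 : R,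
  forall r d : R, 0 < r -> 0 < d -> R0 <= r / d ->
  0 <= r / d + / 2 - IZR (Zfloor (r / d + / 2)) <= eps0 ->
  forall (N : nat) (ex ey : nat -> R), UNTF N ex ey ->
  forall pr : Riemann_integrable (Ed2 d r N ex ey) 0 (2 * PI),
  sqrt (RiemannInt pr) >= C * (d * sqrt d) / sqrt r.
Proof.
  exists (/ 100000), (/ 192). split; [lra|]. split; [lra|]. exists 16.
  intros r d hr hd hK heps N ex ey hF pr.
  destruct (Zfloor_bound (r / d + /2)) as [hlo hhi].
  set (k := Z.to_nat (Zfloor (r / d + /2))).
  assert (hk : INR k = IZR (Zfloor (r / d + /2))).
  { unfold k. rewrite INR_IZR_INZ, Z2Nat.id; [reflexivity|]. apply le_IZR. lra. }
  assert (hk2 : (2 <= k)%nat) by (apply INR_le; rewrite hk; simpl; lra).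
  set (J := 4 * d * d * lattice_defect (r / d) (S k)).
  assert (hJ : d * d * sqrt (r / d) / 96 <= J).
  { assert (sqrt (r / d) / 384 <= lattice_defect (r / d) (S k))
      by (apply (lattice_defect_ge _ k (r / d + /2 - INR k)); try lia; lra).
    unfold J. assert (0 < d * d) by nra. nra. }
  assert (hsq : J / (2 * r) <= sqrt (RiemannInt pr)).
  { apply sqrt_RiemannInt_Ed2_ge; [exact hF|exact hr|pose proof (sqrt_pos (r / d)); nra|].
    intros j hj. destruct hF as [_ [hu _]]. apply is_RInt_err_corr; auto.
    assert (r = d * (r / d)) by (field; lra). rewrite S_INR, hk. nra. }
  apply Rle_ge, Rle_trans with (J / 2 / r); [|replace (J / 2 / r) with (J / (2 * r))
    by (field; lra); exact hsq].
  rewrite mul_sqrt_div_sqrt by assumption.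
  apply Rmult_le_compat_r; [apply Rlt_le, Rinv_0_lt_compat, hr|lra].
Qed.
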